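(* Let $U$ be a nonempty finite set, $R\subseteq U\times U$ serial and transitive, and $r$ the rank function of $M(Reg(U,R))$. Let $n$ be an integer with $1\le n\le h(U)$, and let $X,Y\in Reg(U,R)$ with $h(X)=n$ and $h(Y)=n-1$. Then for every $Z\subseteq U$ with $Y\subsetneq Z\subsetneq X$, $r(Z)=h(X)$.
   Context: $R_s(x)=\{y\in U\mid xRy\}$; $\underline{R}(X)=\{x\mid R_s(x)\subseteq X\}$, $\overline{R}(X)=\{x\mid R_s(x)\cap X\neq\emptyset\}$; $X$ is regular if $X=\underline{R}(\overline{R}(X))$, and $Reg(U,R)$ is the lattice of regular sets under inclusion, with least element $\emptyset$. $h(A)$ is the length of a maximal chain in $[\emptyset,A]$. $M(Reg(U,R))$ is the matroid on $U$ with independent sets $\{X\subseteq U\mid h(Y)\ge|X\cap Y|\ \forall Y\in Reg(U,R)\}$ and rank function $r(X)=\max\{|I|\mid I\subseteq X \text{ independent}\}$. *)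

From mathcomp Require Import all_boot.
Set Implicit Arguments. Unset Strict Implicit. Unset Printing Implicit Defensive.

Section RoughSets.
Variables (T : finType) (R : rel T).

Definition Rs (x : T) : {set T} := [set y | R x y].
Definition lowerR (X : {set T}) : {set T} := [set x | Rs x \subset X].
Definition upperR (X : {set T}) : {set T} := [set x | Rs x :&: X != set0].
Definition regular (X : {set T}) : bool := X == lowerR (upperR X).

Definition chain_in (A : {set T}) (C : {set {set T}}) : bool :=
  [forall Y in C, regular Y && (set0 \subset Y) && (Y \subset A)] &&
  [forall Y in C, forall Z in C, (Y \subset Z) || (Z \subset Y)].

Definition h (A : {set T}) : nat :=
  \max_(C : {set {set T}} | chain_in A C) #|C|.-1.

Definition indep (X : {set T}) : bool :=
  [forall Y : {set T}, regular Y ==> (#|X :&: Y| <= h Y)].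

Definition rk (X : {set T}) : nat :=
  \max_(I : {set T} | (I \subset X) && indep I) #|I|.

End RoughSets.

From mathcomp Require Import all_boot.
Set Implicit Arguments. Unset Strict Implicit. Unset Printing Implicit Defensive.

(* Call f final when
   every successor of f sees f back; the successor set Rs R f of a final f
   is a terminal "cluster", and every point reaches some final point.
   1. A regular set W is determined by the final points it contains:
      x \in W iff every final successor of x lies in W (regP).  Hence W is
      determined by its family of clusters (clusters_inj).
   2. For regular W, h W is the number of clusters of W (h_clusters): a
      chain of regular sets has strictly growing cluster families, and
      conversely deleting clusters one at a time gives a chain of regular
      sets of that length.
   3. If Y is regular and z \notin Y, a transversal of the clusters of Y
      plus z is independent of size h Y + 1 (indep_extension); any
      independent subset of a regular X has at most h X points (rk_le_h).
   Proposition 8 follows: for Y \proper Z \proper X, pick z in Z \ Y; then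
   h X = h Y + 1 <= rk Z <= h X. *)

Section TransversalOfImage.
Variables (aT rT : finType) (f : aT -> rT).

(* Every image f @: A has a transversal: a subset of A of the same size on
   which f is injective (keep, in each fibre, the element of least rank). *)
Lemma exists_transversal (A : {set aT}) :
  exists2 S : {set aT}, S \subset A & {in S &, injective f} /\ #|S| = #|f @: A|.
Proof.
pose least x := [forall y in A, (f y == f x) ==> (enum_rank x <= enum_rank y)].
pose S := [set x in A | least x].
have injS : {in S &, injective f}.
  move=> x y; rewrite !inE => /andP [xA /forall_inP lx] /andP [yA /forall_inP ly] fxy.
  apply: enum_rank_inj; apply/val_inj/eqP; rewrite eqn_leq.
  by rewrite (implyP (lx y yA)) ?fxy // (implyP (ly x xA)) ?fxy.
have sSA : S \subset A by apply/subsetP => x; rewrite inE => /andP [].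
exists S => //; split=> //.
rewrite -(card_in_imset injS); apply/eq_card/subset_eqP; rewrite imsetS //=.
apply/subsetP => _ /imsetP [a aA ->].
case: (arg_minnP (fun x => enum_rank x) (_ : [pred x in A | f x == f a] a)).
  by rewrite /= aA eqxx.
move=> x /andP [xA /eqP fx] xmin; apply/imsetP; exists x => //.
rewrite inE xA; apply/forall_inP => y yA; apply/implyP => /eqP fy.
by apply: xmin; rewrite /= yA fy fx eqxx.
Qed.

End TransversalOfImage.

Section RegularSets.
Variables (T : finType) (R : rel T).
Hypotheses (hser : forall x : T, exists y : T, R x y) (htr : transitive R).

(* A point f is final when every successor of f sees f back: f lies in a
   terminal strongly connected component, whose points all share Rs R f. *)
Definition final (f : T) : bool := [forall y, R f y ==> R y f].

Lemma finalP f : reflect (forall y, R f y -> R y f) (final f).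
Proof. by apply: (iffP forallP) => Hf y; apply/implyP/Hf. Qed.

Lemma inRs x y : (y \in Rs R x) = R x y.
Proof. by rewrite inE. Qed.

(* By seriality a final point belongs to its own cluster. *)
Lemma final_refl f : final f -> R f f.
Proof. by move=> /finalP Hf; case: (hser f) => y Hy; apply: htr (Hf _ Hy). Qed.

Lemma final_succ f y : final f -> R f y -> final y /\ Rs R y = Rs R f.
Proof.
move=> /finalP Hf Hfy; have Hyf := Hf _ Hfy; split.
  by apply/finalP => w Hyw; apply: htr (Hf _ (htr Hfy Hyw)) Hfy.
by apply/setP => w; rewrite !inRs; apply/idP/idP => H; [apply: htr H | apply: htr Hyf H].
Qed.

(* Every point reaches a final point: a successor with a minimal successor
   set has only successors with the same successor set. *)
Lemma reach_final x : exists2 f, R x f & final f.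
Proof.
case: (hser x) => y0 Hy0.
case: (arg_minnP (fun y => #|Rs R y|) (Hy0 : R x y0)) => y Hxy Hmin.
case: (hser y) => z Hyz; exists z; first exact: htr Hxy Hyz.
apply/finalP => w Hzw; have Hyw := htr Hyz Hzw.
have Hsub : Rs R w \subset Rs R y by apply/subsetP => v; rewrite !inRs; apply: htr.
have /eqP Ewy : Rs R w == Rs R y by rewrite eqEcard Hsub Hmin // (htr Hxy Hyw).
by rewrite -inRs Ewy inRs.
Qed.

Lemma regP (W : {set T}) x : regular R W ->
  reflect (forall f, final f -> R x f -> f \in W) (x \in W).
Proof.
move=> /eqP HW; apply: (iffP idP) => [Hx f Hf Hxf | H].
  rewrite HW inE; apply/subsetP => y; rewrite inRs => Hfy.
  have [_ Ey] := final_succ Hf Hfy.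
  move: Hx; rewrite {1}HW inE => /subsetP /(_ f); rewrite inRs => /(_ Hxf).
  by rewrite !inE Ey.
rewrite HW inE; apply/subsetP => y; rewrite inRs => Hxy.
case: (reach_final y) => f Hyf Hf.
rewrite inE; apply/set0Pn; exists f; rewrite inE inRs Hyf /=.
exact: H Hf (htr Hxy Hyf).
Qed.

Definition clusters (W : {set T}) : {set {set T}} :=
  [set Rs R f | f in [set f in W | final f]].

Lemma clusters_mono (W W' : {set T}) : W \subset W' -> clusters W \subset clusters W'.
Proof.
move=> /subsetP S; apply/subsetP => c /imsetP [f]; rewrite inE => /andP [Hf Hff] ->.
by apply/imsetP; exists f => //; rewrite inE (S _ Hf) Hff.
Qed.

Lemma final_mem_clusters (W : {set T}) f : regular R W -> final f ->
  (f \in W) = (Rs R f \in clusters W).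
Proof.
move=> HW Hf; apply/idP/idP => [H | /imsetP [g]].
  by apply/imsetP; exists f => //; rewrite inE H Hf.
rewrite inE => /andP [Hg _] E.
have : f \in Rs R g by rewrite -E inRs final_refl.
by rewrite inRs; apply: (elimT (regP g HW) Hg) f Hf.
Qed.

Lemma clusters_inj (W W' : {set T}) : regular R W -> regular R W' ->
  clusters W = clusters W' -> W = W'.
Proof.
move=> HW HW' E; apply/setP => x; apply/idP/idP => Hx.
  apply/(regP x HW') => f Hf Hxf; rewrite (final_mem_clusters HW' Hf) -E.
  by rewrite -(final_mem_clusters HW Hf); apply: (elimT (regP x HW) Hx).
apply/(regP x HW) => f Hf Hxf; rewrite (final_mem_clusters HW Hf) E.
by rewrite -(final_mem_clusters HW' Hf); apply: (elimT (regP x HW') Hx).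
Qed.

Lemma cluster_outside (W Y : {set T}) z : regular R W -> regular R Y ->
  z \in W -> z \notin Y -> exists2 c, c \in clusters W & c \notin clusters Y.
Proof.
move=> HW HY zW zY.
have [f /andP [Hf Hzf] fY] : exists2 f, final f && R z f & f \notin Y.
  apply/exists_inP; apply: contraR zY; rewrite negb_exists_in => /forall_inP H.
  by apply/(regP z HY) => f Hf Hzf; apply/negbNE/H; rewrite Hf.
exists (Rs R f); first by rewrite -final_mem_clusters //; apply: (elimT (regP z HW) zW).
by rewrite -final_mem_clusters.
Qed.


Lemma chain_inP (A : {set T}) (C : {set {set T}}) :
  reflect ((forall V, V \in C -> regular R V && (V \subset A)) /\
           (forall V W, V \in C -> W \in C -> (V \subset W) || (W \subset V)))
          (chain_in R A C).
Proof.
apply: (iffP andP) => [[/forall_inP H1 /forall_inP H2] | [H1 H2]]; split.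
- by move=> V /H1; rewrite sub0set andbT.
- by move=> V W /H2 /forall_inP; apply.
- by apply/forall_inP => V /H1; rewrite sub0set andbT.
- by apply/forall_inP => V HV; apply/forall_inP => W HW; apply: H2.
Qed.

Lemma set0_regular : regular R set0.
Proof.
apply/eqP/setP => x; rewrite !inE; symmetry; apply/negP => /subsetP H.
case: (hser x) => y Hy; have := H y; rewrite inRs Hy => /(_ isT).
by rewrite inE setI0 eqxx.
Qed.

Lemma h_mono (A B : {set T}) : A \subset B -> h R A <= h R B.
Proof.
move=> AB; apply/bigmax_leqP => C /chain_inP [H1 H2]; apply: leq_bigmax_cond.
apply/chain_inP; split=> // V /H1 /andP [-> VA]; exact: subset_trans AB.
Qed.

Lemma chain_extend (A B : {set T}) (C : {set {set T}}) :
  regular R A -> B \subset A -> chain_in R B C -> chain_in R A (A |: (set0 |: C)).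
Proof.
move=> HA BA /chain_inP [H1 H2].
have subA V : V \in A |: (set0 |: C) -> V \subset A.
  rewrite !inE => /orP [/eqP -> | /orP [/eqP -> | /H1 /andP [_ VB]]].
  - exact: subxx.
  - exact: sub0set.
  - exact: subset_trans BA.
apply/chain_inP; split=> [V HV | V W HV HW]; rewrite ?subA ?andbT //.
  move: HV; rewrite !inE => /orP [/eqP -> // | /orP [/eqP -> | /H1 /andP [] //]].
  exact: set0_regular.
move: HV HW (subA V HV) (subA W HW); rewrite !inE.
case/orP=> [/eqP -> | /orP [/eqP -> | HV]]; case/orP=> [/eqP -> | /orP [/eqP -> | HW]];
  rewrite ?sub0set ?orbT // => VA WA; [by rewrite subxx | by rewrite WA orbT | by rewrite VA | exact: H2].
Qed.

Lemma h_strict (A B : {set T}) : regular R A -> B \proper A -> h R B < h R A.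
Proof.
move=> HA /properP [BA [a aA aB]].
have [C HC ->] : {C | chain_in R B C & h R B = #|C|.-1}.
  apply: eq_bigmax_cond; apply/card_gt0P; exists set0.
  by apply/chain_inP; split=> [V | V W]; rewrite inE.
have AC : A \notin set0 |: C.
  rewrite !inE negb_or; apply/andP; split.
    by apply: contraTneq aA => ->; rewrite inE.
  apply: contraNN aB => /((elimT (chain_inP B C) HC).1) /andP [_ /subsetP]; apply.
  exact: aA.
apply: leq_trans (leq_bigmax_cond _ (chain_extend HA BA HC)).
rewrite cardsU1 AC add1n /= cardsU1.
case: (boolP (set0 \in C)) => [s0C | _]; last by case: #|C|.
have : 0 < #|C| by apply/card_gt0P; exists set0.
by case: #|C|.
Qed.

(* Upper bound: the clusters of the members of a chain below W are
   distinct subsets of clusters W, linearly ordered by inclusion. *)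
Lemma h_upper (W : {set T}) : h R W <= #|clusters W|.
Proof.
apply/bigmax_leqP => C /chain_inP [H1 H2].
set s := [seq #|clusters V| | V <- enum C].
have uniq_s : uniq s.
  rewrite map_inj_in_uniq ?enum_uniq // => V V'; rewrite !mem_enum => HV HV' E.
  have /andP [rV _] := H1 V HV; have /andP [rV' _] := H1 V' HV'.
  apply: clusters_inj rV rV' _; apply/eqP.
  case/orP: (H2 V V' HV HV') => S; last rewrite eq_sym.
    by rewrite eqEcard (clusters_mono S) E leqnn.
  by rewrite eqEcard (clusters_mono S) E leqnn.
have sub_s : {subset s <= iota 0 (#|clusters W|.+1)}.
  move=> k /mapP [V HV ->]; rewrite mem_enum in HV.
  rewrite mem_iota /= add0n ltnS; apply/subset_leq_card/clusters_mono.
  by case/andP: (H1 V HV).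
have := uniq_leq_size uniq_s sub_s; rewrite size_map -cardE size_iota.
by case: #|C|.
Qed.

(* The largest regular set whose clusters all lie in the family S. *)
Definition regS (S : {set {set T}}) : {set T} :=
  [set x | [forall f, (final f && R x f) ==> (Rs R f \in S)]].

Lemma regSP (S : {set {set T}}) x :
  reflect (forall f, final f -> R x f -> Rs R f \in S) (x \in regS S).
Proof.
rewrite inE; apply: (iffP forallP) => H f.
  by move=> Hf Hxf; move/implyP: (H f); rewrite Hf Hxf; apply.
by apply/implyP => /andP [Hf Hxf]; apply: H.
Qed.

Lemma regS_regular (S : {set {set T}}) : regular R (regS S).
Proof.
apply/eqP/setP => x; rewrite [in RHS]inE; apply/idP/idP.
- move/regSP => Hx; apply/subsetP => y; rewrite inRs => Hxy.
  case: (reach_final y) => f Hyf Hf.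
  rewrite inE; apply/set0Pn; exists f; rewrite inE inRs Hyf /=.
  apply/regSP => g Hg Hfg; have [_ ->] := final_succ Hf Hfg.
  exact: Hx Hf (htr Hxy Hyf).
- move/subsetP => H; apply/regSP => f Hf Hxf.
  have := H f; rewrite inRs => /(_ Hxf); rewrite inE => /set0Pn [w].
  rewrite inE inRs => /andP [Hfw /regSP Hw].
  exact: Hw f Hf ((elimT (finalP f) Hf) w Hfw).
Qed.

(* Lower bound: removing the clusters of S one at a time yields a strictly
   decreasing sequence of regular sets, hence a chain of length #|S|. *)
Lemma h_regS (S : {set {set T}}) : S \subset clusters setT -> #|S| <= h R (regS S).
Proof.
have [k] := ubnP #|S|; elim: k S => // k IH S ltSk Ssub.
have [-> // | /card_gt0P [c Hc]] := posnP #|S|.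
have /imsetP [f] := subsetP Ssub c Hc; rewrite inE => /andP [_ Hf] Ec.
move: ltSk; rewrite (cardsD1 c S) Hc add1n ltnS => ltSk.
apply: leq_ltn_trans (IH _ ltSk (subset_trans (subD1set S c) Ssub)) _.
apply/h_strict/properP; first exact: regS_regular.
split.
  apply/subsetP => x /regSP Hx; apply/regSP => g Hg Hxg.
  by have := Hx g Hg Hxg; rewrite inE => /andP [].
exists f.
  by apply/regSP => g Hg Hfg; have [_ ->] := final_succ Hf Hfg; rewrite -Ec.
by apply/negP => /regSP /(_ f Hf (final_refl Hf)); rewrite -Ec !inE eqxx.
Qed.

Lemma h_clusters (W : {set T}) : regular R W -> h R W = #|clusters W|.
Proof.
move=> HW; apply/eqP; rewrite eqn_leq h_upper /=.
apply: leq_trans (h_regS (clusters_mono (subsetT W))) (h_mono _).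
apply/subsetP => x /regSP Hx; apply/(regP x HW) => f Hf Hxf.
by rewrite (final_mem_clusters HW Hf); apply: Hx.
Qed.

(* Every independent subset of a regular set X has at most h X points
   (test independence against X itself), so rk Z <= h X for Z in X. *)
Lemma rk_le_h (X Z : {set T}) : regular R X -> Z \subset X -> rk R Z <= h R X.
Proof.
move=> HX ZX; apply/bigmax_leqP => I /andP [IZ /forallP /(_ X)].
by rewrite HX /= (setIidPl (subset_trans IZ ZX)).
Qed.

(* One final representative per cluster of a regular Y, together with a point
   z outside Y, is independent: a regular W meets the representatives only
   in clusters of W common with Y, and contains z only if it has a further
   cluster outside Y. *)
Lemma indep_extension (Y : {set T}) z : regular R Y -> z \notin Y ->
  exists2 I : {set T}, I \subset z |: Y & indep R I /\ #|I| = #|clusters Y|.+1.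
Proof.
move=> HY zY.
have [S SF [injS cardS]] := exists_transversal (Rs R) [set f in Y | final f].
have SY : S \subset Y by apply: subset_trans SF _; apply/subsetP => f /setIdP [].
have zS : z \notin S by apply: contra zY; apply: (subsetP SY).
exists (z |: S); first exact: setUS.
split; last by rewrite cardsU1 zS cardS.
apply/forallP => W; apply/implyP => HW; rewrite h_clusters //.
have SW : #|S :&: W| <= #|clusters Y :&: clusters W|.
  have injSW : {in S :&: W &, injective (Rs R)} by apply: sub_in2 injS => x /setIP [].
  rewrite -(card_in_imset injSW); apply/subset_leq_card/subsetP => c /imsetP [f].
  move=> /setIP [/(subsetP SF) /setIdP [fY Hf] fW] ->.
  by rewrite inE -!final_mem_clusters ?fY.
case: (boolP (z \in W)) => zW.
  have [c cW cY] := cluster_outside HW HY zW zY.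
  have zSW : (z |: S) :&: W \subset z |: (S :&: W).
    by apply/subsetP => x; rewrite !inE => /andP [/orP [-> | ->] ->]; rewrite ?orbT.
  apply: leq_trans (subset_leq_card zSW) _.
  rewrite (cardsD1 c (clusters W)) cW cardsU1 add1n; apply: leq_add (leq_b1 _) _.
  apply: leq_trans SW (subset_leq_card _); apply/subsetP => d /setIP [dY dW].
  by rewrite !inE dW andbT; apply: contraNneq cY => <-.
apply: leq_trans (leq_trans SW (subset_leq_card (subsetIr _ _))).
apply/subset_leq_card/subsetP => x; rewrite !inE => /andP [/orP [/eqP -> | ->] xW] //.
by rewrite xW in zW.
Qed.

End RegularSets.

Theorem proposition8 (T : finType) (R : rel T)
  (hne : 0 < #|T|)
  (hser : forall x : T, exists y : T, R x y)
  (htr : transitive R)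
  (n : nat) (hn1 : 1 <= n) (hn2 : n <= h R [set: T])
  (X Y : {set T}) (hX : regular R X) (hY : regular R Y)
  (hXn : h R X = n) (hYn : h R Y = n - 1) :
  forall Z : {set T}, Y \proper Z -> Z \proper X -> rk R Z = h R X.
Proof.
move=> Z /properP [YZ [z zZ zY]] /proper_sub ZX.
have [I IzY [indI cardI]] := indep_extension hser htr hY zY.
have IZ : I \subset Z by apply: subset_trans IzY _; rewrite subUset sub1set zZ YZ.
have rkI : #|I| <= rk R Z by apply: leq_bigmax_cond; rewrite IZ indI.
apply/eqP; rewrite eqn_leq rk_le_h //=; apply: leq_trans rkI.
by rewrite cardI -h_clusters // hYn hXn subn1 prednK.
Qed.
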